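(* Let $(\theta_1,\theta_2)$, $K_2$ be as in the normal form: on a domain in the $(x,z)$-half-plane $z>0$, $$\theta_1=\frac{dx}{z},\qquad \theta_2=\frac{dz-(\mu(x)z^2+1)dx}{z},\qquad K_2=1-\mu(x)z^2,$$ with $\mu$ a smooth function of one variable. Consider the linear system for functions $a,b,p$: $$da=(2a+p+1)\theta_1,\qquad db=-2b(K_2-1)\theta_1+(2b-p+1)\theta_2,\qquad dp=-\bigl(2b+(K_2-2)(p-1)\bigr)\theta_1+(2a+p+1)\theta_2.$$ Assume the domain is connected and its projection to the $x$-axis is an interval. Then $(a,b,p)$ is a solution if and only if $$a=-1+f(x),\qquad b=-(1+\mu(x)z^2)f(x)+z f'(x)-\tfrac12 z^2 f''(x),\qquad p=1-2f(x)+zf'(x),$$ for a function $f$ satisfying $f'''+4\mu f'+2\mu' f=0$. The general such $f$ is $$f=-c_0\phi_0^2-2c_1\phi_0\phi_1-c_2\phi_1^2,$$ with constants $c_0,c_1,c_2$, where $(\phi_0,\phi_1)$ is any pair of solutions of $\phi''+\mu\phi=0$ satisfying $\phi_0\phi_1'-\phi_1\phi_0'=1$.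
   Context: This linear system is the specialization, under $K_1\equiv1$ (Type I), of the system governing realizations of an endomorphism field with the given coframing. In that correspondence, positive solutions $a,b$ give realizations. *)

From Stdlib Require Import Reals.
From Coquelicot Require Import Coquelicot.
Open Scope R_scope.

(** Points of the (x,z)-plane are pairs of reals; a subset is a predicate
    [U : R -> R -> Prop].  A 1-form [c_x dx + c_z dz] at a point is the pair
    of its coefficients [(c_x, c_z)]. *)

Definition open2 (U : R -> R -> Prop) : Prop :=
  forall x z, U x z -> exists eps : R, 0 < eps /\
    forall u v, Rabs (u - x) < eps -> Rabs (v - z) < eps -> U u v.

Definition connected2 (U : R -> R -> Prop) : Prop :=
  forall V W : R -> R -> Prop, open2 V -> open2 W ->
    (forall x z, U x z -> V x z \/ W x z) ->
    (forall x z, U x z -> V x z -> W x z -> False) ->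
    (forall x z, U x z -> V x z) \/ (forall x z, U x z -> W x z).

Definition domain2 (U : R -> R -> Prop) : Prop := open2 U /\ connected2 U.

Definition projx (U : R -> R -> Prop) (x : R) : Prop := exists z, U x z.

Definition is_interval (I : R -> Prop) : Prop :=
  forall x1 x2 x, I x1 -> I x2 -> x1 <= x -> x <= x2 -> I x.

Definition form := (R * R)%type.
Definition fplus (a b : form) : form := (fst a + fst b, snd a + snd b).
Definition fscal (c : R) (a : form) : form := (c * fst a, c * snd a).

Definition theta1 (mu : R -> R) (x z : R) : form := (1 / z, 0).
Definition theta2 (mu : R -> R) (x z : R) : form :=
  (- (mu x * z ^ 2 + 1) / z, 1 / z).
Definition K2 (mu : R -> R) (x z : R) : R := 1 - mu x * z ^ 2.

Definition has_d (f : R -> R -> R) (x z : R) (w : form) : Prop :=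
  differentiable_pt_lim f x z (fst w) (snd w).

Definition is_solution (U : R -> R -> Prop) (mu : R -> R)
    (a b p : R -> R -> R) : Prop :=
  forall x z, U x z ->
    let A := a x z in let B := b x z in let P := p x z in
    let t1 := theta1 mu x z in let t2 := theta2 mu x z in
    let K := K2 mu x z in
    has_d a x z (fscal (2 * A + P + 1) t1) /\
    has_d b x z (fplus (fscal (- 2 * B * (K - 1)) t1)
                       (fscal (2 * B - P + 1) t2)) /\
    has_d p x z (fplus (fscal (- (2 * B + (K - 2) * (P - 1))) t1)
                       (fscal (2 * A + P + 1) t2)).

Definition third_order_sol (I : R -> Prop) (mu f : R -> R) : Prop :=
  forall x, I x ->
    (forall k, (k <= 3)%nat -> ex_derive_n f k x) /\
    Derive_n f 3 x + 4 * mu x * Derive f x + 2 * Derive mu x * f x = 0.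

Definition second_order_sol (I : R -> Prop) (mu phi : R -> R) : Prop :=
  forall x, I x ->
    (forall k, (k <= 2)%nat -> ex_derive_n phi k x) /\
    Derive_n phi 2 x + mu x * phi x = 0.

Definition smooth_on (I : R -> Prop) (mu : R -> R) : Prop :=
  forall n x, I x -> ex_derive_n mu n x.

From Stdlib Require Import Reals Lra Lia Psatz Classical ClassicalEpsilon.
From Coquelicot Require Import Coquelicot.
Open Scope R_scope.

(* Put [f = a + 1].  Reading the three equations in [x]- and [z]-components, a solution is the
   same as a function [f] of [x] alone whose first two derivatives are [(2a + p + 1) / z] and
   [2 (a + p - b - mu z^2 (a + 1)) / z^2] and which satisfies [f''' + 4 mu f' + 2 mu' f = 0].
   Near each point this is a computation with partial derivatives.  The jets read off at
   different points of one vertical slice of [U] agree because [U] is connected and a solution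
   of the linear third-order equation is determined by its jet at one point (an energy
   estimate); the converse direction is a differentiation.
   For the second part: if [g'' + mu g = 0 = h'' + mu h] then [g h] solves the third-order
   equation, and [f g' h' - f' (g' h + g h') / 2 + (f'' / 2 + mu f) g h] is constant along
   every solution [f]; when [phi0 phi1' - phi1 phi0' = 1] these constants for
   [(g, h) = (phi0, phi0), (phi0, phi1), (phi1, phi1)] give back [f]. *)

Ltac rewrite_is_derive H :=
  match type of H with is_derive ?f ?x ?l =>
    replace (Derive (fun t => f t) x) with l by (symmetry; exact (is_derive_unique _ _ _ H))
  end.

Lemma differentiable_pt_lim_partials (f : R -> R -> R) x z lx lz :
  differentiable_pt_lim f x z lx lz ->
  is_derive (fun u => f u z) x lx /\ is_derive (fun v => f x v) z lz.
Proof.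
  intros Hf; split; apply is_derive_Reals.
  - pose proof (derivable_pt_lim_comp_2d f id (fun _ => z) x lx lz 1 0 Hf
      (derivable_pt_lim_id x) (derivable_pt_lim_const z x)) as H.
    now rewrite Rmult_1_r, Rmult_0_r, Rplus_0_r in H.
  - pose proof (derivable_pt_lim_comp_2d f (fun _ => x) id z lx lz 0 1 Hf
      (derivable_pt_lim_const x z) (derivable_pt_lim_id z)) as H.
    now rewrite Rmult_1_r, Rmult_0_r, Rplus_0_l in H.
Qed.

Lemma differentiable_pt_lim_plus (f g : R -> R -> R) x z fx fz gx gz :
  differentiable_pt_lim f x z fx fz -> differentiable_pt_lim g x z gx gz ->
  differentiable_pt_lim (fun u v => f u v + g u v) x z (fx + gx) (fz + gz).
Proof.
  rewrite <- !filterdiff_differentiable_pt_lim; intros Hf Hg.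
  eapply filterdiff_ext_lin; [exact (filterdiff_plus_fct _ _ _ _ Hf Hg) |].
  intros [u v]; unfold plus; simpl; ring.
Qed.

Lemma differentiable_pt_lim_mult_sep (g h : R -> R) x z dg dh :
  is_derive g x dg -> is_derive h z dh ->
  differentiable_pt_lim (fun u v => g u * h v) x z (dg * h z) (g x * dh).
Proof.
  intros Hg Hh; apply filterdiff_differentiable_pt_lim.
  assert (Hg2 : filterdiff (fun w : R * R => g (fst w)) (locally (x, z))
                  (fun w => scal (fst w) dg)).
  { apply (filterdiff_comp' (fun w : R * R => fst w) g (x, z) (fun w => fst w)
             (fun t => scal t dg)); [apply filterdiff_linear, is_linear_fst | exact Hg]. }
  assert (Hh2 : filterdiff (fun w : R * R => h (snd w)) (locally (x, z))
                  (fun w => scal (snd w) dh)).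
  { apply (filterdiff_comp' (fun w : R * R => snd w) h (x, z) (fun w => snd w)
             (fun t => scal t dh)); [apply filterdiff_linear, is_linear_snd | exact Hh]. }
  eapply filterdiff_ext_lin; [exact (filterdiff_mult_fct _ _ _ _ _ Rmult_comm Hg2 Hh2) |].
  intros [u v]; unfold scal, plus, mult; simpl; unfold mult; simpl; ring.
Qed.

Lemma differentiable_pt_lim_quadratic (c0 c1 c2 : R -> R) x z d0 d1 d2 lx lz :
  is_derive c0 x d0 -> is_derive c1 x d1 -> is_derive c2 x d2 ->
  lx = d0 + d1 * z + d2 * z ^ 2 -> lz = c1 x + 2 * c2 x * z ->
  differentiable_pt_lim (fun u v => c0 u + c1 u * v + c2 u * v ^ 2) x z lx lz.
Proof.
  intros H0 H1 H2 -> ->.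
  assert (Hc : is_derive (fun _ : R => 1) z 0) by (auto_derive; auto; ring).
  assert (Hv : is_derive (fun v : R => v) z 1) by (auto_derive; auto; ring).
  assert (Hv2 : is_derive (fun v : R => v ^ 2) z (2 * z)) by (auto_derive; auto; ring).
  pose proof (differentiable_pt_lim_plus _ _ x z _ _ _ _
    (differentiable_pt_lim_plus _ _ x z _ _ _ _
       (differentiable_pt_lim_mult_sep c0 _ x z _ _ H0 Hc)
       (differentiable_pt_lim_mult_sep c1 _ x z _ _ H1 Hv))
    (differentiable_pt_lim_mult_sep c2 _ x z _ _ H2 Hv2)) as H.
  replace (d0 + d1 * z + d2 * z ^ 2) with (d0 * 1 + d1 * z + d2 * z ^ 2) by ring.
  replace (c1 x + 2 * c2 x * z) with (c0 x * 0 + c1 x * 1 + c2 x * (2 * z)) by ring.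
  eapply differentiable_pt_lim_ext; [| exact H].
  apply locally_2d_forall; intros u v; simpl; ring.
Qed.

Lemma is_derive_continuity_pt (g : R -> R) t l : is_derive g t l -> continuity_pt g t.
Proof.
  intros H; apply continuity_pt_filterlim, (ex_derive_continuous g t); now exists l.
Qed.

Lemma is_derive_zero_eq (g : R -> R) a b :
  (forall t, Rmin a b <= t <= Rmax a b -> is_derive g t 0) -> g a = g b.
Proof.
  intros H; destruct (MVT_gen g a b (fun _ => 0)) as [c [_ Hc]].
  - intros t Ht; apply H; lra.
  - intros t Ht; exact (is_derive_continuity_pt _ _ _ (H t Ht)).
  - lra.
Qed.

Lemma continuity_pt_bounded (g : R -> R) a b :
  (forall s, Rmin a b <= s <= Rmax a b -> continuity_pt g s) ->
  exists M, forall s, Rmin a b <= s <= Rmax a b -> Rabs (g s) <= M.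
Proof.
  intros Hc.
  destruct (continuity_ab_maj (fun s => Rabs (g s)) (Rmin a b) (Rmax a b)) as [m [Hm _]].
  - apply (Rle_trans _ a); [apply Rmin_l | apply Rmax_l].
  - intros s Hs; apply (continuity_pt_comp g Rabs); [now apply Hc | apply Rcontinuity_abs].
  - now exists (Rabs (g m)).
Qed.

Lemma smooth_on_continuity_pt I mu t :
  smooth_on I mu -> I t -> continuity_pt mu t /\ continuity_pt (Derive mu) t.
Proof.
  intros Hmu Ht.
  destruct (Hmu 1%nat t Ht) as [l1 H1]; destruct (Hmu 2%nat t Ht) as [l2 H2].
  split; [exact (is_derive_continuity_pt _ _ _ H1) | exact (is_derive_continuity_pt _ _ _ H2)].
Qed.

Lemma locally_open_interval (l r x : R) : l < x < r -> locally x (fun s => l < s < r).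
Proof. intros Hx; apply (locally_interval _ x l r); simpl; tauto. Qed.

Lemma two_Rabs_mult_le_sum_sqr (a b : R) : 2 * Rabs (a * b) <= a ^ 2 + b ^ 2.
Proof.
  pose proof (pow2_ge_0 (a + b)); pose proof (pow2_ge_0 (a - b)).
  unfold Rabs; destruct (Rcase_abs (a * b)); nra.
Qed.

Lemma energy_deriv_bound u0 u1 u2 m n M N :
  Rabs m <= M -> Rabs n <= N ->
  Rabs (2 * u0 * u1 + 2 * u1 * u2 - 2 * u2 * (4 * m * u1 + 2 * n * u0))
  <= (2 + 4 * M + 2 * N) * (u0 ^ 2 + u1 ^ 2 + u2 ^ 2).
Proof.
  intros Hm Hn; apply Rabs_le_between in Hm, Hn.
  pose proof (two_Rabs_mult_le_sum_sqr u0 u1); pose proof (two_Rabs_mult_le_sum_sqr u1 u2).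
  pose proof (two_Rabs_mult_le_sum_sqr u0 u2).
  pose proof (Rle_abs (u0 * u1)); pose proof (Rle_abs (- (u0 * u1))).
  pose proof (Rle_abs (u1 * u2)); pose proof (Rle_abs (- (u1 * u2))).
  pose proof (Rle_abs (u0 * u2)); pose proof (Rle_abs (- (u0 * u2))).
  rewrite !Rabs_Ropp in *.
  apply Rabs_le_between; split; nra.
Qed.

Lemma nonneg_vanishes_of_deriv_bound (g dg : R -> R) (C c t : R) :
  (forall s, Rmin c t <= s <= Rmax c t ->
     is_derive g s (dg s) /\ 0 <= g s /\ Rabs (dg s) <= C * g s) ->
  g c = 0 -> g t = 0.
Proof.
  intros H Hc.
  (* mean value theorem for [g e^{ks}], with [k = -C] to the right of [c], [k = C] to the left *)
  assert (Hmvt : forall k, exists xi, Rmin c t <= xi <= Rmax c t /\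
      g t * exp (k * t) - g c * exp (k * c) = (dg xi + k * g xi) * exp (k * xi) * (t - c)).
  { intros k.
    assert (Hd : forall s, Rmin c t <= s <= Rmax c t ->
        is_derive (fun s => g s * exp (k * s)) s ((dg s + k * g s) * exp (k * s))).
    { intros s Hs; destruct (H s Hs) as [Hg _].
      auto_derive; [now exists (dg s) |].
      rewrite_is_derive Hg; ring. }
    destruct (MVT_gen (fun s => g s * exp (k * s)) c t
                (fun s => (dg s + k * g s) * exp (k * s))) as [xi [Hxi Heq]].
    - intros s Hs; apply Hd; lra.
    - intros s Hs; exact (is_derive_continuity_pt _ _ _ (Hd s Hs)).
    - now exists xi. }
  destruct (H t) as [_ [Ht _]]; [split; [apply Rmin_r | apply Rmax_r] |].
  destruct (Rle_dec c t) as [Hct | Hct].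
  - destruct (Hmvt (- C)) as [xi [Hxi Heq]]; destruct (H xi Hxi) as [_ [_ Hb]].
    apply Rabs_le_between in Hb; rewrite Hc, Rmult_0_l, Rminus_0_r in Heq.
    assert (Hneg : (dg xi + - C * g xi) * exp (- C * xi) * (t - c) <= 0).
    { apply Rmult_le_0_r; [| lra]; apply Rmult_le_0_r; [lra | apply Rlt_le, exp_pos]. }
    pose proof (exp_pos (- C * t)); nra.
  - destruct (Hmvt C) as [xi [Hxi Heq]]; destruct (H xi Hxi) as [_ [_ Hb]].
    apply Rabs_le_between in Hb; rewrite Hc, Rmult_0_l, Rminus_0_r in Heq.
    assert (Hneg : (dg xi + C * g xi) * exp (C * xi) * (t - c) <= 0).
    { apply Rmult_le_0_l; [| lra]; apply Rmult_le_pos; [lra | apply Rlt_le, exp_pos]. }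
    pose proof (exp_pos (C * t)); nra.
Qed.

(** * The third-order equation [y''' + 4 mu y' + 2 mu' y = 0] *)

Definition jet (y : R -> R) (t : R) : R * R * R := (y t, Derive y t, Derive_n y 2 t).

Lemma jet_eq_iff y w t u :
  jet y t = jet w u <->
  y t = w u /\ Derive y t = Derive w u /\ Derive_n y 2 t = Derive_n w 2 u.
Proof.
  unfold jet; split; [intros H; injection H; auto | intros [-> [-> ->]]; reflexivity].
Qed.

Definition ode3_tower (J : R -> Prop) (mu y y1 y2 : R -> R) : Prop :=
  forall t, J t -> is_derive y t (y1 t) /\ is_derive y1 t (y2 t) /\
    is_derive y2 t (- (4 * mu t * y1 t + 2 * Derive mu t * y t)).

Lemma ode3_tower_lincomb J mu y y1 y2 w w1 w2 (al be : R) :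
  ode3_tower J mu y y1 y2 -> ode3_tower J mu w w1 w2 ->
  ode3_tower J mu (fun t => al * y t + be * w t) (fun t => al * y1 t + be * w1 t)
    (fun t => al * y2 t + be * w2 t).
Proof.
  intros Hy Hw t Ht.
  destruct (Hy t Ht) as [Y0 [Y1 Y2]]; destruct (Hw t Ht) as [W0 [W1 W2]].
  split; [| split]; [| | replace (- _) with (al * - (4 * mu t * y1 t + 2 * Derive mu t * y t)
                                            + be * - (4 * mu t * w1 t + 2 * Derive mu t * w t))
                         by ring];
    apply (is_derive_plus (fun t => al * _ t) (fun t => be * _ t)); now apply is_derive_scal.
Qed.

Lemma ode3_tower_zero mu y y1 y2 c t :
  (forall s, Rmin c t <= s <= Rmax c t -> continuity_pt mu s /\ continuity_pt (Derive mu) s) ->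
  ode3_tower (fun s => Rmin c t <= s <= Rmax c t) mu y y1 y2 ->
  y c = 0 -> y1 c = 0 -> y2 c = 0 -> y t = 0 /\ y1 t = 0 /\ y2 t = 0.
Proof.
  intros Hmu Hy Z0 Z1 Z2.
  destruct (continuity_pt_bounded mu c t) as [M HM]; [intros s Hs; apply Hmu, Hs |].
  destruct (continuity_pt_bounded (Derive mu) c t) as [N HN]; [intros s Hs; apply Hmu, Hs |].
  set (E := fun s => y s ^ 2 + y1 s ^ 2 + y2 s ^ 2).
  assert (Et : E t = 0).
  { apply (nonneg_vanishes_of_deriv_bound E
      (fun s => 2 * y s * y1 s + 2 * y1 s * y2 s
                - 2 * y2 s * (4 * mu s * y1 s + 2 * Derive mu s * y s)) (2 + 4 * M + 2 * N) c t).
    - intros s Hs; destruct (Hy s Hs) as [D0 [D1 D2]]; split; [| split].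
      + unfold E; auto_derive; [repeat split; eexists; eassumption |].
        rewrite_is_derive D0; rewrite_is_derive D1; rewrite_is_derive D2; ring.
      + unfold E; pose proof (pow2_ge_0 (y s)); pose proof (pow2_ge_0 (y1 s));
          pose proof (pow2_ge_0 (y2 s)); lra.
      + unfold E; apply energy_deriv_bound; [apply HM | apply HN]; exact Hs.
    - unfold E; rewrite Z0, Z1, Z2; ring. }
  unfold E in Et; repeat split; nra.
Qed.

Lemma is_derive_chain3 (y y1 y2 y3 : R -> R) x :
  locally x (fun t => is_derive y t (y1 t) /\ is_derive y1 t (y2 t) /\ is_derive y2 t (y3 t)) ->
  (forall k, (k <= 3)%nat -> ex_derive_n y k x) /\
  Derive y x = y1 x /\ Derive_n y 2 x = y2 x /\ Derive_n y 3 x = y3 x.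
Proof.
  intros H.
  assert (E1 : locally x (fun t => Derive_n y 1 t = y1 t)).
  { eapply filter_imp; [| exact H]; intros t [Ht _]; now apply is_derive_unique. }
  assert (E2 : locally x (fun t => Derive_n y 2 t = y2 t /\ ex_derive (Derive_n y 1) t)).
  { eapply filter_imp; [| exact (filter_and _ _ H (locally_locally _ _ E1))].
    intros t [[_ [Ht _]] Hl]; split.
    - change (Derive (Derive_n y 1) t = y2 t); rewrite (Derive_ext_loc _ y1 t Hl).
      now apply is_derive_unique.
    - apply (ex_derive_ext_loc y1); [| now exists (y2 t)].
      eapply filter_imp; [| exact Hl]; intros; now symmetry. }
  destruct (locally_singleton _ _ H) as [H0 [_ H2]].
  destruct (locally_singleton _ _ E2) as [D2 X2].
  assert (D3 : is_derive (Derive_n y 2) x (y3 x)).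
  { apply (is_derive_ext_loc y2); [| exact H2].
    eapply filter_imp; [| exact E2]; intros t [Ht _]; now symmetry. }
  repeat split.
  - intros k Hk; destruct k as [| [| [| [| k]]]]; try lia; simpl; auto.
    + now exists (y1 x).
    + now exists (y3 x).
  - now apply is_derive_unique.
  - exact D2.
  - now apply is_derive_unique.
Qed.

Lemma third_order_sol_of_tower (J : R -> Prop) mu y y1 y2 :
  open J -> ode3_tower J mu y y1 y2 ->
  third_order_sol J mu y /\ forall t, J t -> jet y t = (y t, y1 t, y2 t).
Proof.
  intros HJ Hy.
  assert (Hc : forall t, J t -> (forall k, (k <= 3)%nat -> ex_derive_n y k t) /\
      Derive y t = y1 t /\ Derive_n y 2 t = y2 t /\
      Derive_n y 3 t = - (4 * mu t * y1 t + 2 * Derive mu t * y t)).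
  { intros t Ht;
      apply (is_derive_chain3 y y1 y2 (fun s => - (4 * mu s * y1 s + 2 * Derive mu s * y s))).
    eapply filter_imp; [exact Hy | exact (HJ t Ht)]. }
  split; intros t Ht; destruct (Hc t Ht) as [Hk [D1 [D2 D3]]].
  - split; [exact Hk |]; rewrite D1, D3; ring.
  - unfold jet; now rewrite D1, D2.
Qed.

Lemma ode3_tower_of_third_order_sol J mu y :
  third_order_sol J mu y -> ode3_tower J mu y (Derive y) (Derive_n y 2).
Proof.
  intros Hy t Ht; destruct (Hy t Ht) as [Hk Heq].
  assert (X1 : ex_derive y t) by exact (Hk 1%nat ltac:(lia)).
  assert (X2 : ex_derive (Derive y) t) by exact (Hk 2%nat ltac:(lia)).
  assert (X3 : ex_derive (Derive_n y 2) t) by exact (Hk 3%nat ltac:(lia)).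
  split; [exact (Derive_correct _ _ X1) | split; [exact (Derive_correct _ _ X2) |]].
  replace (- _) with (Derive_n y 3 t) by lra; exact (Derive_correct _ _ X3).
Qed.

Lemma third_order_sol_ext_loc (J K : R -> Prop) mu y g :
  third_order_sol J mu y ->
  (forall t, K t -> J t /\ locally t (fun s => g s = y s)) ->
  third_order_sol K mu g /\ forall t, K t -> jet g t = jet y t.
Proof.
  intros Hy HK.
  assert (Hext : forall t, K t -> (forall k, ex_derive_n y k t -> ex_derive_n g k t) /\
      forall k, Derive_n g k t = Derive_n y k t).
  { intros t Ht; destruct (HK t Ht) as [_ Hl]; split.
    - intros k; apply ex_derive_n_ext_loc; eapply filter_imp; [| exact Hl]; now symmetry.
    - intros k; exact (Derive_n_ext_loc g y k t Hl). }
  split; intros t Ht; destruct (Hext t Ht) as [Hk Hd].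
  - destruct (Hy t (proj1 (HK t Ht))) as [Hky Heq]; split; [auto |].
    rewrite (Hd 3%nat), (Hd 1%nat : Derive g t = _), (Hd 0%nat : g t = _); exact Heq.
  - unfold jet; rewrite (Hd 0%nat : g t = _), (Hd 1%nat : Derive g t = _), (Hd 2%nat).
    reflexivity.
Qed.

Section Continuation.

Variables (I : R -> Prop) (mu : R -> R).
Hypothesis Hmu : smooth_on I mu.

Lemma third_order_sol_unique l1 r1 l2 r2 Y1 Y2 c t :
  (forall s, l1 < s < r1 -> I s) ->
  third_order_sol (fun s => l1 < s < r1) mu Y1 ->
  third_order_sol (fun s => l2 < s < r2) mu Y2 ->
  l1 < c < r1 -> l2 < c < r2 -> l1 < t < r1 -> l2 < t < r2 ->
  jet Y1 c = jet Y2 c -> jet Y1 t = jet Y2 t.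
Proof.
  intros HI S1 S2 Hc1 Hc2 Ht1 Ht2 Hc.
  set (seg := fun s => Rmin c t <= s <= Rmax c t).
  assert (Hseg : forall s, seg s -> l1 < s < r1 /\ l2 < s < r2).
  { unfold seg, Rmin, Rmax; intros s Hs; destruct (Rle_dec c t); lra. }
  assert (T : ode3_tower seg mu (fun s => 1 * Y1 s + -1 * Y2 s)
      (fun s => 1 * Derive Y1 s + -1 * Derive Y2 s)
      (fun s => 1 * Derive_n Y1 2 s + -1 * Derive_n Y2 2 s)).
  { apply ode3_tower_lincomb; intros s Hs; destruct (Hseg s Hs).
    - now apply (ode3_tower_of_third_order_sol _ _ _ S1).
    - now apply (ode3_tower_of_third_order_sol _ _ _ S2). }
  assert (Hcont : forall s, seg s -> continuity_pt mu s /\ continuity_pt (Derive mu) s).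
  { intros s Hs; apply (smooth_on_continuity_pt I); [exact Hmu | apply HI, Hseg, Hs]. }
  apply jet_eq_iff in Hc; destruct Hc as [E0 [E1 E2]].
  destruct (ode3_tower_zero mu _ _ _ c t Hcont T) as [Z0 [Z1 Z2]]; try lra.
  apply jet_eq_iff; lra.
Qed.

Lemma third_order_sol_glue l1 r1 l2 r2 Y1 Y2 c :
  (forall s, l1 < s < r1 -> I s) ->
  third_order_sol (fun s => l1 < s < r1) mu Y1 ->
  third_order_sol (fun s => l2 < s < r2) mu Y2 ->
  l1 < c < r1 -> l2 < c < r2 -> jet Y1 c = jet Y2 c ->
  exists G, third_order_sol (fun s => Rmin l1 l2 < s < Rmax r1 r2) mu G /\
    (forall t, l1 < t < r1 -> jet G t = jet Y1 t) /\
    (forall t, l2 < t < r2 -> jet G t = jet Y2 t).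
Proof.
  intros HI S1 S2 Hc1 Hc2 Hc.
  set (G := fun s => if Rlt_dec l1 s then if Rlt_dec s r1 then Y1 s else Y2 s else Y2 s).
  assert (G1 : forall s, l1 < s < r1 -> G s = Y1 s).
  { intros s Hs; unfold G; destruct (Rlt_dec l1 s); destruct (Rlt_dec s r1); lra. }
  assert (G2 : forall s, l2 < s < r2 -> G s = Y2 s).
  { intros s Hs; destruct (Rlt_dec l1 s); [destruct (Rlt_dec s r1) |].
    - rewrite G1 by lra.
      assert (Hj := third_order_sol_unique l1 r1 l2 r2 Y1 Y2 c s HI S1 S2 Hc1 Hc2
                      ltac:(lra) Hs Hc).
      now apply jet_eq_iff in Hj.
    - unfold G; destruct (Rlt_dec l1 s); destruct (Rlt_dec s r1); lra.
    - unfold G; destruct (Rlt_dec l1 s); lra. }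
  destruct (third_order_sol_ext_loc _ (fun s => l1 < s < r1) mu Y1 G S1) as [T1 J1].
  { intros t Ht; split; [exact Ht |].
    eapply filter_imp; [exact G1 | exact (locally_open_interval _ _ _ Ht)]. }
  destruct (third_order_sol_ext_loc _ (fun s => l2 < s < r2) mu Y2 G S2) as [T2 J2].
  { intros t Ht; split; [exact Ht |].
    eapply filter_imp; [exact G2 | exact (locally_open_interval _ _ _ Ht)]. }
  exists G; split; [| split; [exact J1 | exact J2]].
  intros t Ht.
  assert (l1 < t < r1 \/ l2 < t < r2) as [Ht' | Ht']
    by (unfold Rmin, Rmax in Ht; destruct (Rle_dec l1 l2); destruct (Rle_dec r1 r2); lra).
  - exact (T1 t Ht').
  - exact (T2 t Ht').
Qed.

End Continuation.

(** * From a solution of the system to [f] *)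

(* [f], [f'] and [f''] solved for from the formulas for [a], [b], [p] in the theorem. *)
Definition sys_f (a : R -> R -> R) x z := a x z + 1.
Definition sys_df (a p : R -> R -> R) x z := (2 * a x z + p x z + 1) / z.
Definition sys_d2f (mu : R -> R) (a b p : R -> R -> R) x z :=
  2 * (a x z + p x z - b x z - mu x * z ^ 2 * (a x z + 1)) / z ^ 2.
Definition sys_jet mu a b p x z : R * R * R :=
  (sys_f a x z, sys_df a p x z, sys_d2f mu a b p x z).

Lemma solution_partials U mu a b p x z :
  is_solution U mu a b p -> U x z -> 0 < z -> ex_derive mu x ->
  (is_derive (fun u => sys_f a u z) x (sys_df a p x z) /\
   is_derive (fun u => sys_df a p u z) x (sys_d2f mu a b p x z) /\
   is_derive (fun u => sys_d2f mu a b p u z) x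
     (- (4 * mu x * sys_df a p x z + 2 * Derive mu x * sys_f a x z))) /\
  (is_derive (fun v => sys_f a x v) z 0 /\
   is_derive (fun v => sys_df a p x v) z 0 /\
   is_derive (fun v => sys_d2f mu a b p x v) z 0).
Proof.
  intros Hs Hu Hz Xmu; destruct (Hs x z Hu) as [Ha [Hb Hp]].
  unfold has_d, fscal, fplus, theta1, theta2, K2 in Ha, Hb, Hp; simpl in Ha, Hb, Hp.
  apply differentiable_pt_lim_partials in Ha, Hb, Hp.
  destruct Ha as [Hax Haz], Hb as [Hbx Hbz], Hp as [Hpx Hpz].
  unfold sys_f, sys_df, sys_d2f.
  split; [split; [| split] | split; [| split]]; auto_derive; repeat split;
    try (eexists; eassumption); try exact Xmu; try (intros ?; nra);
    rewrite_is_derive Hax; rewrite_is_derive Haz; rewrite_is_derive Hbx;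
    rewrite_is_derive Hbz; rewrite_is_derive Hpx; rewrite_is_derive Hpz;
    try change (Derive (fun t => mu t) x) with (Derive mu x); field; lra.
Qed.

Section Solution.

Variables (U : R -> R -> Prop) (mu : R -> R) (a b p : R -> R -> R).
Hypotheses (HU : open2 U) (Hpos : forall x z, U x z -> 0 < z)
  (Hmu : smooth_on (projx U) mu) (Hsol : is_solution U mu a b p).

Definition local_profile x z e : Prop :=
  0 < e /\
  third_order_sol (fun u => x - e < u < x + e) mu (fun u => sys_f a u z) /\
  forall u v, Rabs (u - x) < e -> Rabs (v - z) < e ->
    U u v /\ jet (fun s => sys_f a s z) u = sys_jet mu a b p u v.

Lemma local_profile_exists x z : U x z -> exists e, local_profile x z e.
Proof.
  intros Hu; destruct (HU x z Hu) as [e [He Hbox]].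
  assert (Hpart := fun u v Hu' Hv' => solution_partials U mu a b p u v Hsol (Hbox u v Hu' Hv')
    (Hpos u v (Hbox u v Hu' Hv')) (Hmu 1%nat u (ex_intro _ v (Hbox u v Hu' Hv')))).
  assert (Hz : Rabs (z - z) < e) by (rewrite Rminus_diag, Rabs_R0; exact He).
  destruct (third_order_sol_of_tower (fun u => x - e < u < x + e) mu (fun u => sys_f a u z)
              (fun u => sys_df a p u z) (fun u => sys_d2f mu a b p u z)) as [T J].
  - intros u Hu'; exact (locally_open_interval _ _ _ Hu').
  - intros u Hu'; apply Hpart; [apply Rabs_lt_between; lra | exact Hz].
  - exists e; split; [exact He | split; [exact T |]].
    intros u v Hu' Hv'; split; [now apply Hbox |].
    rewrite J by (apply Rabs_lt_between in Hu'; lra).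
    unfold sys_jet; f_equal; [f_equal |]; apply is_derive_zero_eq; intros s Hs;
      apply (Hpart u s Hu'); apply Rabs_lt_between; apply Rabs_lt_between in Hv';
      unfold Rmin, Rmax in Hs; destruct (Rle_dec z v); lra.
Qed.

Section Reachability.

Variables (x0 z0 : R).

Definition reachable x z : Prop :=
  exists l r Y, (forall t, l < t < r -> projx U t) /\
    third_order_sol (fun t => l < t < r) mu Y /\ l < x0 < r /\ l < x < r /\
    jet Y x0 = sys_jet mu a b p x0 z0 /\ jet Y x = sys_jet mu a b p x z.

Lemma reachable_local_profile x z e : local_profile x z e ->
  (exists w v, Rabs (w - x) < e /\ Rabs (v - z) < e /\ reachable w v) ->
  forall u v, Rabs (u - x) < e -> Rabs (v - z) < e -> reachable u v.
Proof.
  intros [He [S HS]] [w [v' [Hw [Hv' [l [r [Y [HI [SY [Hx0 [Hwlr [J0 Jw]]]]]]]]]]]] u v Hu Hv.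
  apply Rabs_lt_between in Hw, Hu.
  destruct (third_order_sol_glue (projx U) mu Hmu l r (x - e) (x + e) Y _ w HI SY S Hwlr
              ltac:(lra)) as [G [SG [G1 G2]]].
  { rewrite Jw; symmetry; apply HS; [apply Rabs_lt_between; lra | exact Hv']. }
  exists (Rmin l (x - e)), (Rmax r (x + e)), G.
  assert (Hl := Rmin_l l (x - e)); assert (Hl' := Rmin_r l (x - e)).
  assert (Hr := Rmax_l r (x + e)); assert (Hr' := Rmax_r r (x + e)).
  split; [| split; [exact SG | split; [lra | split; [lra | split]]]].
  - intros t Ht.
    assert (l < t < r \/ x - e < t < x + e) as [Ht' | Ht']
      by (unfold Rmin, Rmax in Ht; destruct (Rle_dec l (x - e)); destruct (Rle_dec r (x + e));
          lra).
    + exact (HI t Ht').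
    + exists z; apply HS; [apply Rabs_lt_between; lra | rewrite Rminus_diag, Rabs_R0; lra].
  - rewrite G1 by lra; exact J0.
  - rewrite G2 by lra; apply HS; [apply Rabs_lt_between; lra | exact Hv].
Qed.

Lemma reachable_base : U x0 z0 -> reachable x0 z0.
Proof.
  intros H0; destruct (local_profile_exists x0 z0 H0) as [e [He [S HS]]].
  destruct (HS x0 z0) as [_ J]; try (rewrite Rminus_diag, Rabs_R0; exact He).
  exists (x0 - e), (x0 + e), (fun u => sys_f a u z0).
  split; [| split; [exact S | split; [lra | split; [lra | split; exact J]]]].
  intros t Ht; exists z0.
  apply HS; [apply Rabs_lt_between; lra | rewrite Rminus_diag, Rabs_R0; lra].
Qed.

(* Reachable points and their complement are both open, by [reachable_local_profile]. *)
Lemma reachable_everywhere : connected2 U -> U x0 z0 -> forall x z, U x z -> reachable x z.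
Proof.
  intros Hc H0.
  assert (Hcenter : forall x z e, 0 < e -> Rabs (x - x) < e /\ Rabs (z - z) < e)
    by (intros x z e He; rewrite !Rminus_diag, Rabs_R0; auto).
  destruct (Hc (fun x z => U x z /\ reachable x z) (fun x z => U x z /\ ~ reachable x z))
    as [HV | HW].
  - intros x z [Hu Hr]; destruct (local_profile_exists x z Hu) as [e Hs].
    exists e; split; [apply Hs |]; intros u v Hu' Hv'; split; [now apply Hs |].
    apply (reachable_local_profile x z e Hs); [| exact Hu' | exact Hv'].
    destruct (Hcenter x z e (proj1 Hs)); now exists x, z.
  - intros x z [Hu Hn]; destruct (local_profile_exists x z Hu) as [e Hs].
    exists e; split; [apply Hs |]; intros u v Hu' Hv'; split; [now apply Hs |].
    intros Hr; apply Hn; destruct (Hcenter x z e (proj1 Hs)).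
    apply (reachable_local_profile x z e Hs); auto; now exists u, v.
  - intros x z Hu; destruct (classic (reachable x z)); tauto.
  - intros x z _ [_ Hr] [_ Hn]; exact (Hn Hr).
  - intros x z Hu; exact (proj2 (HV x z Hu)).
  - destruct (HW x0 z0 H0) as [_ Hn]; exfalso; exact (Hn (reachable_base H0)).
Qed.

Lemma sys_jet_vertical : connected2 U -> U x0 z0 ->
  forall x z1 z2, U x z1 -> U x z2 -> sys_jet mu a b p x z1 = sys_jet mu a b p x z2.
Proof.
  intros Hc H0 x z1 z2 H1 H2.
  destruct (reachable_everywhere Hc H0 x z1 H1) as [l1 [r1 [Y1 [HI1 [S1 [A1 [B1 [C1 D1]]]]]]]].
  destruct (reachable_everywhere Hc H0 x z2 H2) as [l2 [r2 [Y2 [HI2 [S2 [A2 [B2 [C2 D2]]]]]]]].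
  rewrite <- D1, <- D2.
  apply (third_order_sol_unique (projx U) mu Hmu l1 r1 l2 r2 Y1 Y2 x0); auto.
  now rewrite C1, C2.
Qed.

End Reachability.

Lemma third_order_profile_of_is_solution : connected2 U ->
  exists f, third_order_sol (projx U) mu f /\
    forall x z, U x z -> jet f x = sys_jet mu a b p x z.
Proof.
  intros Hc.
  destruct (classic (exists x0 z0, U x0 z0)) as [[x0 [z0 H0]] | Hne].
  2: { exists (fun _ => 0); split; [intros x [z Hu] | intros x z Hu]; exfalso; eauto. }
  set (zsel := fun x => epsilon (inhabits 0) (fun z => U x z)).
  set (f := fun x => sys_f a x (zsel x)).
  assert (Hloc : forall x z, U x z ->
      ((forall k, (k <= 3)%nat -> ex_derive_n f k x) /\
       Derive_n f 3 x + 4 * mu x * Derive f x + 2 * Derive mu x * f x = 0) /\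
      jet f x = sys_jet mu a b p x z).
  { intros x z Hu; destruct (local_profile_exists x z Hu) as [e [He [S HS]]].
    destruct (third_order_sol_ext_loc (fun u => x - e < u < x + e) (fun s => s = x) mu _ f S)
      as [T J].
    - intros t ->; split; [lra |].
      eapply filter_imp; [| exact (locally_open_interval (x - e) (x + e) x ltac:(lra))].
      intros s Hs; destruct (HS s z) as [Hsz _];
        [apply Rabs_lt_between; lra | rewrite Rminus_diag, Rabs_R0; exact He |].
      assert (Hsel : U s (zsel s)) by (apply epsilon_spec; now exists z).
      exact (f_equal (fun j => fst (fst j)) (sys_jet_vertical x0 z0 Hc H0 s _ _ Hsel Hsz)).
    - split; [exact (T x eq_refl) |]; rewrite (J x eq_refl).
      apply HS; rewrite Rminus_diag, Rabs_R0; exact He. }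
  exists f; split.
  - intros x [z Hu]; exact (proj1 (Hloc x z Hu)).
  - intros x z Hu; exact (proj2 (Hloc x z Hu)).
Qed.

End Solution.

Lemma open2_locally_2d U (g h : R -> R -> R) x z :
  open2 U -> U x z -> (forall u v, U u v -> g u v = h u v) ->
  locally_2d (fun u v => g u v = h u v) x z.
Proof.
  intros HU Hu Hgh; destruct (HU x z Hu) as [e [He Hbox]].
  exists (mkposreal e He); intros u v Hu' Hv'; apply Hgh, Hbox; assumption.
Qed.

Lemma sys_jet_inversion mu (a b p : R -> R -> R) f x z :
  0 < z -> jet f x = sys_jet mu a b p x z ->
  a x z = -1 + f x /\
  b x z = - (1 + mu x * z ^ 2) * f x + z * Derive f x - / 2 * z ^ 2 * Derive_n f 2 x /\
  p x z = 1 - 2 * f x + z * Derive f x.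
Proof.
  intros Hz Hj; unfold jet, sys_jet, sys_f, sys_df, sys_d2f in Hj.
  injection Hj as J0 J1 J2.
  rewrite J0, J1; simpl in J2 |- *; rewrite J2; split; [ring | split]; field; lra.
Qed.

Lemma is_solution_of_third_order_sol U mu f a b p :
  open2 U -> (forall x z, U x z -> 0 < z) -> smooth_on (projx U) mu ->
  third_order_sol (projx U) mu f ->
  (forall x z, U x z ->
     a x z = -1 + f x /\
     b x z = - (1 + mu x * z ^ 2) * f x + z * Derive f x - / 2 * z ^ 2 * Derive_n f 2 x /\
     p x z = 1 - 2 * f x + z * Derive f x) ->
  is_solution U mu a b p.
Proof.
  intros HU Hpos Hmu Hf Habp x z Hu.
  assert (Ix : projx U x) by (exists z; exact Hu).
  destruct (ode3_tower_of_third_order_sol _ _ _ Hf x Ix) as [D0 [D1 D2]].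
  assert (Xmu : ex_derive mu x) by exact (Hmu 1%nat x Ix).
  assert (Hz := Hpos x z Hu).
  assert (Loc := fun g h => open2_locally_2d U g h x z HU Hu).
  cbv zeta; unfold has_d, fscal, fplus, theta1, theta2, K2; simpl.
  destruct (Habp x z Hu) as [EA [EB EP]]; rewrite EA, EB, EP.
  split; [| split].
  - apply (differentiable_pt_lim_ext (fun u v => (-1 + f u) + 0 * v + 0 * v ^ 2)).
    { apply Loc; intros u v Huv; destruct (Habp u v Huv) as [E _]; rewrite E; ring. }
    apply (differentiable_pt_lim_quadratic _ _ _ x z (Derive f x) 0 0).
    + auto_derive; [now exists (Derive f x) | rewrite_is_derive D0; ring].
    + auto_derive; auto.
    + auto_derive; auto.
    + field; lra.
    + ring.
  - apply (differentiable_pt_lim_ext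
      (fun u v => - f u + Derive f u * v + (- (mu u * f u) - / 2 * Derive_n f 2 u) * v ^ 2)).
    { apply Loc; intros u v Huv; destruct (Habp u v Huv) as [_ [E _]]; rewrite E; ring. }
    apply (differentiable_pt_lim_quadratic _ _ _ x z (- Derive f x) (Derive_n f 2 x)
      (- (Derive mu x * f x + mu x * Derive f x)
       + / 2 * (4 * mu x * Derive f x + 2 * Derive mu x * f x))).
    + auto_derive; [now exists (Derive f x) | rewrite_is_derive D0; ring].
    + exact D1.
    + auto_derive.
      * split; [exact Xmu | split; [now exists (Derive f x) |]].
        split; [eexists; exact D2 | exact I].
      * change (Derive (fun t => mu t) x) with (Derive mu x).
        change (Derive (fun t => f t) x) with (Derive f x).
        replace (Derive (fun t => Derive (fun s => Derive (fun r => f r) s) t) x)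
          with (- (4 * mu x * Derive f x + 2 * Derive mu x * f x))
          by (symmetry; exact (is_derive_unique _ _ _ D2)).
        ring.
    + field; lra.
    + field; lra.
  - apply (differentiable_pt_lim_ext (fun u v => (1 - 2 * f u) + Derive f u * v + 0 * v ^ 2)).
    { apply Loc; intros u v Huv; destruct (Habp u v Huv) as [_ [_ E]]; rewrite E; ring. }
    apply (differentiable_pt_lim_quadratic _ _ _ x z (- 2 * Derive f x) (Derive_n f 2 x) 0).
    + auto_derive; [now exists (Derive f x) | rewrite_is_derive D0; ring].
    + exact D1.
    + auto_derive; auto.
    + field; lra.
    + field; lra.
Qed.

(** * Quadratic expressions in solutions of [phi'' + mu phi = 0] *)

Lemma second_order_sol_derive J mu g t : second_order_sol J mu g -> J t ->
  is_derive g t (Derive g t) /\ is_derive (Derive g) t (- mu t * g t).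
Proof.
  intros Hg Ht; destruct (Hg t Ht) as [Hk Heq].
  assert (X1 : ex_derive g t) by exact (Hk 1%nat ltac:(lia)).
  assert (X2 : ex_derive (Derive g) t) by exact (Hk 2%nat ltac:(lia)).
  split; [exact (Derive_correct _ _ X1) |].
  replace (- mu t * g t) with (Derive_n g 2 t) by (simpl in Heq |- *; lra).
  exact (Derive_correct _ _ X2).
Qed.

Lemma ode3_tower_mul J mu g h :
  (forall t, J t -> ex_derive mu t) ->
  second_order_sol J mu g -> second_order_sol J mu h ->
  ode3_tower J mu (fun t => g t * h t) (fun t => Derive g t * h t + g t * Derive h t)
    (fun t => - 2 * mu t * g t * h t + 2 * Derive g t * Derive h t).
Proof.
  intros Hmu Hg Hh t Ht.
  destruct (second_order_sol_derive J mu g t Hg Ht) as [G0 G1].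
  destruct (second_order_sol_derive J mu h t Hh Ht) as [H0 H1].
  assert (Dmu := Derive_correct _ _ (Hmu t Ht)).
  split; [| split]; auto_derive; repeat split; try (eexists; eassumption);
    rewrite_is_derive G0; rewrite_is_derive G1; rewrite_is_derive H0; rewrite_is_derive H1;
    try rewrite_is_derive Dmu; ring.
Qed.

(* Bilinear in [(g, h)]; constant when [y] solves the third-order equation and [g], [h]
   solve [phi'' + mu phi = 0]. *)
Definition pairing (mu y y1 y2 g h : R -> R) (s : R) : R :=
  y s * Derive g s * Derive h s - y1 s / 2 * (Derive g s * h s + g s * Derive h s)
  + (y2 s / 2 + mu s * y s) * g s * h s.

Lemma pairing_derive J mu y y1 y2 g h t :
  (forall t, J t -> ex_derive mu t) -> ode3_tower J mu y y1 y2 ->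
  second_order_sol J mu g -> second_order_sol J mu h -> J t ->
  is_derive (pairing mu y y1 y2 g h) t 0.
Proof.
  intros Hmu Hy Hg Hh Ht.
  destruct (Hy t Ht) as [Y0 [Y1 Y2]].
  destruct (second_order_sol_derive J mu g t Hg Ht) as [G0 G1].
  destruct (second_order_sol_derive J mu h t Hh Ht) as [H0 H1].
  assert (Dmu := Derive_correct _ _ (Hmu t Ht)).
  unfold pairing; auto_derive; repeat split; try (eexists; eassumption).
  rewrite_is_derive Y0; rewrite_is_derive Y1; rewrite_is_derive Y2;
    rewrite_is_derive G0; rewrite_is_derive G1; rewrite_is_derive H0; rewrite_is_derive H1;
    rewrite_is_derive Dmu; field.
Qed.

Lemma pairing_wronskian_identity mu y y1 y2 g h s :
  y s * (g s * Derive h s - h s * Derive g s) ^ 2 =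
  pairing mu y y1 y2 h h s * g s ^ 2 - 2 * pairing mu y y1 y2 g h s * g s * h s
  + pairing mu y y1 y2 g g s * h s ^ 2.
Proof. unfold pairing; ring. Qed.

Lemma third_order_sol_quadratic I mu phi0 phi1 c0 c1 c2 f :
  open I -> (forall t, I t -> ex_derive mu t) ->
  second_order_sol I mu phi0 -> second_order_sol I mu phi1 ->
  (forall x, I x -> f x = - c0 * phi0 x ^ 2 - 2 * c1 * phi0 x * phi1 x - c2 * phi1 x ^ 2) ->
  third_order_sol I mu f.
Proof.
  intros HI Hmu S0 S1 Hf.
  assert (T := ode3_tower_lincomb _ _ _ _ _ _ _ _ 1 (- c2)
    (ode3_tower_lincomb _ _ _ _ _ _ _ _ (- c0) (- 2 * c1)
       (ode3_tower_mul I mu phi0 phi0 Hmu S0 S0) (ode3_tower_mul I mu phi0 phi1 Hmu S0 S1))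
    (ode3_tower_mul I mu phi1 phi1 Hmu S1 S1)).
  destruct (third_order_sol_of_tower I mu _ _ _ HI T) as [Q _].
  apply (third_order_sol_ext_loc I I mu _ f Q); intros t Ht; split; [exact Ht |].
  eapply filter_imp; [| exact (HI t Ht)]; intros s Hs; simpl; rewrite Hf by exact Hs; ring.
Qed.

Lemma quadratic_of_third_order_sol I mu phi0 phi1 f :
  is_interval I -> (forall t, I t -> ex_derive mu t) ->
  second_order_sol I mu phi0 -> second_order_sol I mu phi1 ->
  (forall x, I x -> phi0 x * Derive phi1 x - phi1 x * Derive phi0 x = 1) ->
  third_order_sol I mu f ->
  exists c0 c1 c2, forall x, I x ->
    f x = - c0 * phi0 x ^ 2 - 2 * c1 * phi0 x * phi1 x - c2 * phi1 x ^ 2.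
Proof.
  intros HI Hmu S0 S1 HW Hf.
  destruct (classic (exists x0, I x0)) as [[x0 I0] | Hne].
  2: { exists 0, 0, 0; intros x Ix; exfalso; eauto. }
  set (E := fun g h => pairing mu f (Derive f) (Derive_n f 2) g h).
  assert (Hconst : forall g h x, second_order_sol I mu g -> second_order_sol I mu h -> I x ->
      E g h x = E g h x0).
  { intros g h x Sg Sh Ix; apply is_derive_zero_eq; intros t Ht.
    apply (pairing_derive I); auto; [apply ode3_tower_of_third_order_sol, Hf |].
    unfold Rmin, Rmax in Ht; destruct (Rle_dec x x0); [apply (HI x x0) | apply (HI x0 x)];
      auto; lra. }
  exists (- E phi1 phi1 x0), (E phi0 phi1 x0), (- E phi0 phi0 x0); intros x Ix.
  rewrite <- !(Hconst _ _ x) by assumption.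
  transitivity (f x * (phi0 x * Derive phi1 x - phi1 x * Derive phi0 x) ^ 2);
    [rewrite HW by exact Ix; ring |].
  rewrite (pairing_wronskian_identity mu f (Derive f) (Derive_n f 2)); unfold E; ring.
Qed.

Lemma open_projx U : open2 U -> open (projx U).
Proof.
  intros HU x [z Hu]; destruct (HU x z Hu) as [e [He Hbox]].
  exists (mkposreal e He); intros t Ht; exists z.
  apply Hbox; [exact Ht | rewrite Rminus_diag, Rabs_R0; exact He].
Qed.

Theorem mainTheorem6 (U : R -> R -> Prop) (mu : R -> R)
  (hU : domain2 U)
  (hz : forall x z, U x z -> 0 < z)
  (hI : is_interval (projx U))
  (hmu : smooth_on (projx U) mu) :
  (forall a b p : R -> R -> R,
     is_solution U mu a b p <->
     exists f : R -> R,
       third_order_sol (projx U) mu f /\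
       forall x z, U x z ->
         a x z = -1 + f x /\
         b x z = - (1 + mu x * z ^ 2) * f x + z * Derive f x
                 - / 2 * z ^ 2 * Derive_n f 2 x /\
         p x z = 1 - 2 * f x + z * Derive f x)
  /\
  (forall phi0 phi1 : R -> R,
     second_order_sol (projx U) mu phi0 ->
     second_order_sol (projx U) mu phi1 ->
     (forall x, projx U x ->
        phi0 x * Derive phi1 x - phi1 x * Derive phi0 x = 1) ->
     forall f : R -> R,
       third_order_sol (projx U) mu f <->
       exists c0 c1 c2 : R, forall x, projx U x ->
         f x = - c0 * phi0 x ^ 2 - 2 * c1 * phi0 x * phi1 x
               - c2 * phi1 x ^ 2).
Proof.
  destruct hU as [HUo HUc].
  assert (Xmu : forall t, projx U t -> ex_derive mu t) by exact (fun t Ht => hmu 1%nat t Ht).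
  split.
  - intros a b p; split.
    + intros Hs.
      destruct (third_order_profile_of_is_solution U mu a b p HUo hz hmu Hs HUc) as [f [Hf Hj]].
      exists f; split; [exact Hf |].
      intros x z Hu; exact (sys_jet_inversion mu a b p f x z (hz x z Hu) (Hj x z Hu)).
    + intros [f [Hf Habp]]; exact (is_solution_of_third_order_sol U mu f a b p HUo hz hmu Hf Habp).
  - intros phi0 phi1 S0 S1 HW f; split.
    + exact (quadratic_of_third_order_sol _ mu phi0 phi1 f hI Xmu S0 S1 HW).
    + intros [c0 [c1 [c2 Hf]]].
      exact (third_order_sol_quadratic _ mu phi0 phi1 c0 c1 c2 f (open_projx U HUo) Xmu S0 S1
               Hf).
Qed.
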